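(* Assume the Continuum Hypothesis. Then there exists a topological space $Z$ which is sequentially separable and selectively separable but is not selectively sequentially separable.
   Context: A space is sequentially separable if it has a countable subset $D$ such that every point is the limit of a sequence from $D$ (a sequentially dense set). A space $Z$ is selectively separable if for every sequence $(D_n:n\in\mathbb{N})$ of dense subsets of $Z$ one can choose finite $F_n\subseteq D_n$ so that $\bigcup_n F_n$ is dense in $Z$. A space $Z$ is selectively sequentially separable if for every sequence $(D_n:n\in\mathbb{N})$ of sequentially dense subsets of $Z$ one can choose finite $F_n\subseteq D_n$ so that $\bigcup_n F_n$ is sequentially dense in $Z$. *)

From HB Require Import structures.
From mathcomp Require Import all_boot all_order all_algebra.
From mathcomp Require Import all_classical all_reals all_analysis.

Set Implicit Arguments.
Unset Strict Implicit.
Unset Printing Implicit Defensive.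

Local Open Scope classical_set_scope.

(* The Continuum Hypothesis: every set of cardinality at most the continuum
   2^aleph_0 = |P(N)| is countable or has the cardinality of the continuum.
   (Every subset of P(N) is countable or equipotent to P(N).) *)
Definition CH : Prop :=
  forall A : set (set nat), countable A \/ (A #= [set: set nat])%card.

Definition seq_dense (Z : topologicalType) (D : set Z) : Prop :=
  forall x : Z, exists u : nat -> Z, (forall n, D (u n)) /\ (u @ \oo --> x).

Definition seq_separable (Z : topologicalType) : Prop :=
  exists D : set Z, countable D /\ seq_dense D.

Definition selectively_separable (Z : topologicalType) : Prop :=
  forall Ds : nat -> set Z, (forall n, dense (Ds n)) ->
  exists Fs : nat -> set Z,
    (forall n, finite_set (Fs n) /\ Fs n `<=` Ds n) /\
    dense (\bigcup_n Fs n).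

Definition selectively_seq_separable (Z : topologicalType) : Prop :=
  forall Ds : nat -> set Z, (forall n, seq_dense (Ds n)) ->
  exists Fs : nat -> set Z,
    (forall n, finite_set (Fs n) /\ Fs n `<=` Ds n) /\
    seq_dense (\bigcup_n Fs n).

(* Being countable, the space is
   sequentially separable, and its countably many isolated leaves are dense and
   lie in every dense set, so picking the n-th leaf at step n witnesses
   selective separability.  The sets D_n of all leaves and all nodes in rows
   >= n are sequentially dense, but for finite F_n in D_n row k of the union
   only meets F_0, ..., F_k.  A sequence in the union converging to the apex
   eventually leaves every column, so its range misses the apex and meets every
   row and every column in a finite set; hence it is closed, and cannot have the
   apex as a limit. *)

From HB Require Import structures.
From mathcomp Require Import all_boot all_order all_algebra.
From mathcomp Require Import all_classical all_reals all_analysis.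

Set Implicit Arguments.
Unset Strict Implicit.
Unset Printing Implicit Defensive.

Local Open Scope classical_set_scope.

Lemma cvg_openP (I : Type) (F : set_system I) {FF : Filter F}
    (T : topologicalType) (f : I -> T) (x : T) :
  f @ F --> x <-> forall U, open U -> U x -> \forall t \near F, U (f t).
Proof.
split=> [fx U oU Ux|fx A]; first exact/fx/open_nbhs_nbhs.
by rewrite nbhsE => -[B [oB Bx] BA]; apply: filterS (fx B oB Bx) => t /BA.
Qed.

Lemma countable_seq_separable (T : topologicalType) :
  countable [set: T] -> seq_separable T.
Proof.
move=> cT; exists setT; split=> // x.
by exists (fun=> x); split=> //; exact: cvg_cst.
Qed.

Lemma finite_set_subset1 (T : Type) (A : set T) : is_subset1 A -> finite_set A.
Proof.
move=> A1; have [[a Aa]|A0] := pselect (A !=set0).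
  by apply: sub_finite_set (finite_set1 a) => b Ab; exact: A1.
by apply: (@sub_finite_set _ _ set0) => // a Aa; apply: A0; exists a.
Qed.

Lemma dense_isolated_selectively_separable (T : topologicalType) (S : set T) :
  countable S -> (forall s, S s -> open [set s]) -> dense S ->
  selectively_separable T.
Proof.
move=> /countable_injP[f finj] Sopen Sdense Ds Ds_dense.
have S_Ds n : S `<=` Ds n.
  by move=> s Ss; have [_ [-> //]] := Ds_dense n _ (ex_intro _ s erefl) (Sopen s Ss).
exists (fun n => [set s | S s /\ f s = n]); split=> [n|].
  split=> [|s [Ss _]]; last exact: S_Ds.
  apply: finite_set_subset1 => s t [Ss fs] [St ft].
  by apply: finj; rewrite ?inE // fs ft.
move=> O O0 oO; have [s [Os Ss]] := Sdense O O0 oO.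
by exists s; split=> //; exists (f s).
Qed.

Lemma near_oo_notin_finite (A : set nat) :
  finite_set A -> \forall n \near \oo, ~ A n.
Proof.
move=> /finite_seqP[s ->]; exists (\max_(x <- s) x).+1 => // n /= + sn.
by rewrite ltnNge leq_bigmax_seq.
Qed.

Inductive arens := apex | node of nat & nat | leaf of nat & nat & nat.

Definition arens_code (z : arens) : option (nat * nat + nat * nat * nat) :=
  match z with
  | apex => None
  | node k j => Some (inl (k, j))
  | leaf k j i => Some (inr (k, j, i))
  end.

Definition arens_decode (o : option (nat * nat + nat * nat * nat)) : arens :=
  match o with
  | None => apex
  | Some (inl (k, j)) => node k j
  | Some (inr (k, j, i)) => leaf k j i
  end.

Lemma arens_codeK : cancel arens_code arens_decode. Proof. by case. Qed.

HB.instance Definition _ := Countable.copy arens (can_type arens_codeK).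

Definition arens_open (U : set arens) : Prop :=
  (U apex -> forall k, \forall j \near \oo, U (node k j)) /\
  (forall k j, U (node k j) -> \forall i \near \oo, U (leaf k j i)).

Lemma arens_openT : arens_open setT.
Proof. by split=> *; exact: filterT. Qed.

Lemma arens_openI : setI_closed arens_open.
Proof.
move=> A B [A1 A2] [B1 B2]; split=> [[/A1 Ak /B1 Bk] k|k j [/A2 Ai /B2 Bi]].
  exact: filterI (Ak k) (Bk k).
exact: filterI Ai Bi.
Qed.

Lemma arens_open_bigcup (I : Type) (U : I -> set arens) :
  (forall i, arens_open (U i)) -> arens_open (\bigcup_i U i).
Proof.
move=> oU; split=> [[i _ Ui] k|k j [i _ Ui]].
  by apply: filterS ((oU i).1 Ui k) => j; exists i.
by apply: filterS ((oU i).2 k j Ui) => i'; exists i.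
Qed.

HB.instance Definition _ :=
  isOpenTopological.Build arens arens_openT arens_openI arens_open_bigcup.

Lemma open_arensP (U : set arens) : open U <-> arens_open U.
Proof.
rewrite openE; split=> [oU|oU z Uz]; last by exists U; split.
split=> [/oU[B [[oB _] Bapex BU]] k|k j /oU[B [[_ oB] Bkj BU]]].
  by apply: filterS (oB Bapex k) => j /BU.
by apply: filterS (oB _ _ Bkj) => i /BU.
Qed.

Definition column_of (z : arens) : option (nat * nat) :=
  match z with apex => None | node k j | leaf k j _ => Some (k, j) end.

Definition is_leaf (z : arens) : bool := if z is leaf _ _ _ then true else false.

Lemma open_arens_leaf k j i : open [set leaf k j i].
Proof. by apply/open_arensP; split. Qed.

Lemma dense_leaves : dense [set z | is_leaf z].
Proof.
move=> O [z Oz] /open_arensP[Oapex Onode].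
have node_leaf k j : O (node k j) -> O `&` [set z | is_leaf z] !=set0.
  by move=> /Onode/filter_ex[i Oi]; exists (leaf k j i).
case: z Oz => [/Oapex/(_ 0)/filter_ex[j /node_leaf]|k j /node_leaf|k j i Oi] //.
by exists (leaf k j i).
Qed.

Lemma selectively_separable_arens : selectively_separable arens.
Proof.
apply: (@dense_isolated_selectively_separable _ [set z | is_leaf z]).
- exact: countableP.
- by case=> // k j i _; exact: open_arens_leaf.
- exact: dense_leaves.
Qed.

Definition arens_tail (n : nat) : set arens :=
  [set z | match z with apex => False | node k _ => (n <= k)%N | leaf _ _ _ => True end].

Lemma seq_dense_arens_tail n : seq_dense (arens_tail n).
Proof.
case=> [|k j|k j i].
- exists (node n); split=> [m|]; first exact: leqnn.
  by apply/cvg_openP => U /open_arensP[+ _] Uapex; move/(_ Uapex n).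
- exists (leaf k j); split=> //.
  by apply/cvg_openP => U /open_arensP[_ +] Ukj; move/(_ k j Ukj).
- by exists (fun=> leaf k j i); split=> //; exact: cvg_cst.
Qed.

Lemma open_column_neq kj : open [set z | column_of z != Some kj].
Proof.
apply/open_arensP; split=> [_ k|k j kj_neq]; last exact: nearW.
case: kj => k' j'; exists j'.+1 => // j /= j'j; apply/eqP => -[_ jj'].
by rewrite jj' ltnn in j'j.
Qed.

Lemma arens_apex_not_seq_limit (S : set arens) (u : nat -> arens) :
  ~ S apex -> (forall k, finite_set (node k @^-1` S)) ->
  (forall n, S (u n)) -> ~ u @ \oo --> apex.
Proof.
move=> Sapex Srow Su u_apex.
have u_leaves_column kj : \forall n \near \oo, column_of (u n) != Some kj.
  exact: (cvg_openP _ _).1 u_apex _ (open_column_neq kj) isT.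
have closed_range : closed (range u).
  rewrite -openC; apply/open_arensP; split=> [_ k|k j _].
    apply: filterS (near_oo_notin_finite (Srow k)) => j Sj [n _ un].
    by apply: Sj; rewrite /= -un; exact: Su.
  have [N _ uN] := u_leaves_column (k, j).
  suff: finite_set (leaf k j @^-1` (u @` `I_N)).
    move=> /near_oo_notin_finite; apply: filterS => i Ni [n _ un].
    apply: Ni; exists n => //=; case: (ltnP n N) => // /uN.
    by rewrite un eqxx.
  apply: finite_preimage; [by move=> ? ? _ _ [] | exact/finite_image/finite_II].
have [n _ un] := closed_cvg (range u) closed_range (nearW _ (imageT u)) _ u_apex.
by apply: Sapex; rewrite -un.
Qed.

Lemma not_selectively_seq_separable_arens : ~ selectively_seq_separable arens.
Proof.
move=> /(_ _ seq_dense_arens_tail)[Fs [Fs_fin Fs_dense]].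
have [u [Fu u_apex]] := Fs_dense apex.
apply: (arens_apex_not_seq_limit _ _ Fu u_apex) => [[n _ /(Fs_fin n).2]//|k].
apply: (@sub_finite_set _ _ (\bigcup_(n in `I_k.+1) node k @^-1` Fs n)).
  by move=> j [n _ Fnj]; exists n => //; exact: (Fs_fin n).2 _ Fnj.
apply: bigcup_finite => [|n _]; first exact: finite_II.
by apply: finite_preimage; [move=> ? ? _ _ [] | exact: (Fs_fin n).1].
Qed.

Theorem theorem4p1 :
  CH ->
  exists Z : topologicalType,
    seq_separable Z /\ selectively_separable Z /\ ~ selectively_seq_separable Z.
Proof.
move=> _; exists arens; split; [|split].
- exact/countable_seq_separable/countableP.
- exact: selectively_separable_arens.
- exact: not_selectively_seq_separable_arens.
Qed.
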